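(* For any single-player extensive-form game $\Gamma$, $$\mathrm{VoR}^{\mathrm{opt}}(\Gamma)=\mathrm{VoR}^{\mathrm{bEDT}}(\Gamma)=\mathrm{VoR}^{\mathrm{bCDT}}(\Gamma)\ge 1.$$
   Context: A single-player extensive-form game consists of a finite rooted tree (nodes $\mathcal H$, leaves $\mathcal Z$, actions $A_h$), nonterminal nodes belonging to Player 1 or to chance (chance having fixed action distributions), utility $u_1:\mathcal Z\to\mathbb R_{\ge0}$, and a partition $\mathcal I_1$ of Player 1's nodes into infosets with common action sets $A_I$. A behavioral strategy $\pi$ assigns $\pi(\cdot\mid I)\in\Delta(A_I)$ to each infoset; $U_1(\pi)=\sum_z\mathbb P(z\mid\pi)u_1(z)$, with $\mathbb P(z\mid\pi)$ the reach probability. $u_1(\mathrm{opt}(\Gamma))=\max_\pi U_1(\pi)$. $\pi^{I\mapsto\sigma}$ plays $\sigma$ at $I$ and as $\pi$ elsewhere. $\pi$ is an EDT equilibrium if for all $I$, $\pi(\cdot\mid I)\in\arg\max_{\sigma\in\Delta(A_I)}U_1(\pi^{I\mapsto\sigma})$; a CDT equilibrium if $\pi$ is a Karush–Kuhn–Tucker point of maximizing $U_1$ over $\prod_I\Delta(A_I)$. $u_1(\mathrm{bEDT}(\Gamma))$, $u_1(\mathrm{bCDT}(\Gamma))$ are the maxima of $U_1$ over EDT resp. CDT equilibria. For a node $h$, $\mathrm{obs}_1(h)$ is the sequence of (infoset, action) pairs at Player 1's nodes on the root-to-$h$ path (excluding $h$); $\mathrm{pr}_1(\Gamma)$ has the same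 tree and utilities, with each infoset partitioned into the classes of $h\sim h'\iff\mathrm{obs}_1(h)=\mathrm{obs}_1(h')$. $\mathrm{VoR}^{\mathrm{SC}}(\Gamma)=u_1(\mathrm{SC}(\mathrm{pr}_1(\Gamma)))/u_1(\mathrm{SC}(\Gamma))$. *)

From HB Require Import structures.
From mathcomp Require Import all_boot all_order all_algebra.
From mathcomp Require Import boolp classical_sets reals topology normedtype derive.
Set Implicit Arguments. Unset Strict Implicit. Unset Printing Implicit Defensive.
Import Order.TTheory GRing.Theory Num.Theory numFieldNormedType.Exports.
Local Open Scope ring_scope.
Local Open Scope classical_set_scope.

(* A finite rooted game tree for a single-player extensive-form game.
   - [Leaf u]      : a leaf with utility u for Player 1;
   - [PNode In ch]  : a Player-1 node in infoset (label) In; its actions are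
                     0, ..., size ch - 1, action k leading to the k-th child;
   - [CNode ch]    : a chance node; ch lists (probability, child) pairs.
   Infosets are the classes of Player-1 nodes carrying the same label. *)
Inductive tree (R L : Type) :=
| Leaf of R
| PNode of L & seq (tree R L)
| CNode of seq (R * tree R L).
Arguments Leaf {R L}.
Arguments PNode {R L}.
Arguments CNode {R L}.

Section Game.
Variable R : realType.

Fixpoint wf_tree (L : Type) (nA : L -> nat) (t : tree R L) : Prop :=
  match t with
  | Leaf u => 0 <= u
  | PNode In ch => size ch = nA In /\
      (fix go (l : seq (tree R L)) : Prop :=
         match l with [::] => True | c :: l' => wf_tree nA c /\ go l' end) ch
  | CNode ch => \sum_(pc <- ch) pc.1 = 1 /\
      (fix go (l : seq (R * tree R L)) : Prop :=
         match l with [::] => True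
         | (p, c) :: l' => 0 <= p /\ wf_tree nA c /\ go l' end) ch
  end.

(* behavioral strategy (as an arbitrary real assignment; see is_strategy) *)
Definition strat (L : Type) := L -> nat -> R.

(* leaves of the tree, each paired with its reach probability P(z | pi):
   the list of (P(z|pi), u_1(z)) *)
Fixpoint leaves (L : Type) (pi : strat L) (t : tree R L) : seq (R * R) :=
  match t with
  | Leaf u => [:: (1, u)]
  | PNode In ch =>
      (fix go (k : nat) (l : seq (tree R L)) : seq (R * R) :=
         match l with
         | [::] => [::]
         | c :: l' => [seq (pi In k * z.1, z.2) | z <- leaves pi c] ++ go k.+1 l'
         end) 0%N ch
  | CNode ch =>
      (fix go (l : seq (R * tree R L)) : seq (R * R) :=
         match l with
         | [::] => [::]
         | (p, c) :: l' => [seq (p * z.1, z.2) | z <- leaves pi c] ++ go l'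
         end) ch
  end.

Definition U (L : Type) (t : tree R L) (pi : strat L) : R :=
  \sum_(z <- leaves pi t) z.1 * z.2.

Definition is_dist (n : nat) (s : nat -> R) : Prop :=
  (forall a, (a < n)%N -> 0 <= s a) /\ \sum_(a < n) s a = 1.

Definition is_strategy (L : Type) (nA : L -> nat) (pi : strat L) : Prop :=
  forall I, is_dist (nA I) (pi I).

Definition upd (L : eqType) (pi : strat L) (I : L) (s : nat -> R) : strat L :=
  fun J => if J == I then s else pi J.

Definition upd_coord (L : eqType) (pi : strat L) (I : L) (a : nat) (x : R)
  : strat L :=
  fun J b => if (J == I) && (b == a) then x else pi J b.

Definition EDT_eq (L : eqType) (nA : L -> nat) (t : tree R L) (pi : strat L)
  : Prop :=
  is_strategy nA pi /\
  forall I (s : nat -> R), is_dist (nA I) s ->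
    U t (upd pi I s) <= U t (upd pi I (pi I)).

Definition dU (L : eqType) (t : tree R L) (pi : strat L) (I : L) (a : nat) : R :=
  @derive1 R R^o (fun x : R => (U t (upd_coord pi I a x) : R^o)) (pi I a).

(* KKT point of  max U_1  over  prod_I Delta(A_I)
   (constraints: pi(a|I) >= 0, sum_a pi(a|I) = 1) *)
Definition CDT_eq (L : eqType) (nA : L -> nat) (t : tree R L) (pi : strat L)
  : Prop :=
  is_strategy nA pi /\
  exists (lam : L -> R) (mu : L -> nat -> R),
    forall I a, (a < nA I)%N ->
      [/\ 0 <= mu I a, mu I a * pi I a = 0 &
          dU t pi I a + mu I a - lam I = 0].

Definition val (L : Type) (SC : strat L -> Prop) (t : tree R L) : R :=
  sup [set x : R | exists pi, SC pi /\ x = U t pi].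

Definition opt_val (L : eqType) (nA : L -> nat) (t : tree R L) : R :=
  val (is_strategy nA) t.
Definition bEDT_val (L : eqType) (nA : L -> nat) (t : tree R L) : R :=
  val (EDT_eq nA t) t.
Definition bCDT_val (L : eqType) (nA : L -> nat) (t : tree R L) : R :=
  val (CDT_eq nA t) t.

(* pr_1: same tree and utilities; each Player-1 node in infoset I with
   observation history o = obs_1(h) is put in the refined infoset (I, o). *)
Fixpoint pr1_aux (L : Type) (o : seq (L * nat)) (t : tree R L)
  : tree R (L * seq (L * nat)) :=
  match t with
  | Leaf u => Leaf u
  | PNode In ch =>
      PNode (In, o)
        ((fix go (k : nat) (l : seq (tree R L)) :=
            match l with
            | [::] => [::]
            | c :: l' => pr1_aux (rcons o (In, k)) c :: go k.+1 l'
            end) 0%N ch)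
  | CNode ch =>
      CNode ((fix go (l : seq (R * tree R L)) :=
                match l with
                | [::] => [::]
                | (p, c) :: l' => (p, pr1_aux o c) :: go l'
                end) ch)
  end.

Definition pr1 (L : Type) (t : tree R L) := pr1_aux [::] t.
Definition pr1_nA (L : Type) (nA : L -> nat) : L * seq (L * nat) -> nat :=
  fun J => nA J.1.

Definition VoR_opt (L : eqType) (nA : L -> nat) (t : tree R L) : R :=
  opt_val (pr1_nA nA) (pr1 t) / opt_val nA t.
Definition VoR_bEDT (L : eqType) (nA : L -> nat) (t : tree R L) : R :=
  bEDT_val (pr1_nA nA) (pr1 t) / bEDT_val nA t.
Definition VoR_bCDT (L : eqType) (nA : L -> nat) (t : tree R L) : R :=
  bCDT_val (pr1_nA nA) (pr1 t) / bCDT_val nA t.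

End Game.

(* An optimal strategy exists: U_1 is a polynomial, hence continuous, in the
   probabilities pi(a|I), and the strategies with all coordinates in [0, 1] form a
   compact set of the product topology (Tychonoff).  An optimal strategy is an EDT
   equilibrium, and it is a KKT point: moving probability from an action a in the
   support to an action m cannot increase U_1, so the one-sided derivative
   dU/dpi(m|I) - dU/dpi(a|I) is <= 0.  Every action in the support thus maximises the
   partial derivative at I, which gives the multipliers.  Hence opt, bEDT and bCDT all
   have the value u_1(opt), both in Gamma and in pr_1(Gamma), and the three ratios
   agree.  The ratio is at least 1 because a strategy of Gamma, played in pr_1(Gamma)
   ignoring the extra observations, keeps its utility. *)

From Pilot Require Import Defs.
From HB Require Import structures.
From mathcomp Require Import all_boot all_order all_algebra.
From mathcomp Require Import mathcomp_extra boolp classical_sets reals.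
From mathcomp Require Import topology normedtype derive.
From mathcomp Require Import ring.
Set Implicit Arguments. Unset Strict Implicit. Unset Printing Implicit Defensive.
Import Order.TTheory GRing.Theory Num.Theory numFieldNormedType.Exports.
Local Open Scope ring_scope.
Local Open Scope classical_set_scope.

Definition all_children (A : Type) (P : A -> Prop) :=
  fix go (s : seq A) : Prop := if s is c :: s' then P c /\ go s' else True.

Section TreeInduction.
Variables (R L : Type) (P : tree R L -> Prop).
Hypotheses (P_leaf : forall u, P (Leaf u))
  (P_pnode : forall I ch, all_children P ch -> P (PNode I ch))
  (P_cnode : forall ch, all_children (fun pc => P pc.2) ch -> P (CNode ch)).

Fixpoint tree_nested_ind (t : tree R L) : P t :=
  match t with
  | Leaf u => P_leaf u
  | PNode J ch => P_pnode J ((fix go l : all_children P l :=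
      if l is c :: l' then conj (tree_nested_ind c) (go l') else Logic.I) ch)
  | CNode ch => P_cnode ((fix go l : all_children (fun pc => P pc.2) l :=
      if l is (_, c) :: l' then conj (tree_nested_ind c) (go l') else Logic.I) ch)
  end.

End TreeInduction.

Lemma is_dist_le1 (R : realType) n (s : nat -> R) a :
  is_dist n s -> (a < n)%N -> s a <= 1.
Proof.
move=> [s_ge0 s_sum] lt_a; rewrite -s_sum (bigD1 (Ordinal lt_a)) //= lerDl.
by apply: sumr_ge0 => b _; exact: s_ge0.
Qed.

Section Value.
Variables (R : realType) (L : Type).
Implicit Types (pi : strat R L) (t : tree R L).

Fixpoint value pi t : R :=
  match t with
  | Leaf u => u
  | PNode J ch => (fix go k l :=
      if l is c :: l' then pi J k * value pi c + go k.+1 l' else 0) 0%N ch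
  | CNode ch => (fix go l :=
      if l is (p, c) :: l' then p * value pi c + go l' else 0) ch
  end.

Lemma sum_scaled_leaves (p : R) (s : seq (R * R)) :
  \sum_(z <- [seq (p * z.1, z.2) | z <- s]) z.1 * z.2 =
  p * \sum_(z <- s) z.1 * z.2.
Proof. by rewrite big_map mulr_sumr; apply: eq_bigr => z _; rewrite mulrA. Qed.

Lemma UE t pi : U t pi = value pi t.
Proof.
rewrite /U; elim/tree_nested_ind: t => [u|I ch IH|ch IH] /=.
- by rewrite big_seq1 mul1r.
- elim: ch 0%N IH => [|c l IHl] k /=; first by rewrite big_nil.
  by case=> IHc IH; rewrite big_cat sum_scaled_leaves IHc IHl.
- elim: ch IH => [|[p c] l IHl] /=; first by rewrite big_nil.
  by case=> IHc IH; rewrite big_cat sum_scaled_leaves IHc IHl.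
Qed.

Lemma value_eq_on (nA : L -> nat) t pi pi' : wf_tree nA t ->
  (forall I a, (a < nA I)%N -> pi I a = pi' I a) -> value pi t = value pi' t.
Proof.
move=> + eq_pi; elim/tree_nested_ind: t => [u|I ch IH|ch IH] //=.
- case=> size_ch; have : forall a, (a < 0 + size ch)%N -> pi I a = pi' I a.
    by rewrite size_ch; exact: eq_pi.
  clear size_ch; elim: ch 0%N IH => [|c l IHl] k //= [IHc IH] eq_k [wf_c wf_l].
  rewrite eq_k ?addnS ?ltnS ?leq_addr // IHc // (IHl k.+1) //.
  by move=> a; rewrite addSnnS; exact: eq_k.
- case=> _; elim: ch IH => [|[p c] l IHl] //= [IHc IH] [_ [wf_c wf_l]].
  by rewrite IHc // IHl.
Qed.

Lemma value_continuous (T : topologicalType) (s : T -> strat R L) t :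
  (forall I a, continuous (fun v => s v I a)) -> continuous (fun v => value (s v) t).
Proof.
move=> s_cont; elim/tree_nested_ind: t => [u|J ch IH|ch IH] /=.
- exact: cst_continuous.
- elim: ch 0%N IH => [|c l IHl] k /=; first by move=> _; exact: cst_continuous.
  case=> IHc IH v; apply: cvgD; last exact: IHl.
  by apply: cvgM; [exact: s_cont | exact: IHc].
- elim: ch IH => [|[p c] l IHl] /=; first by move=> _; exact: cst_continuous.
  case=> IHc IH v; apply: cvgD; last exact: IHl.
  by apply: cvgM; [exact: cst_continuous | exact: IHc].
Qed.

End Value.

Section Refinement.
Variables (R : realType) (L : Type).

Lemma value_pr1 (t : tree R L) o (pi : strat R L) :
  value (fun J => pi J.1) (pr1_aux o t) = value pi t.
Proof.
elim/tree_nested_ind: t o => [u|I ch IH|ch IH] o //=.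
- by elim: ch 0%N IH => [|c l IHl] k //= [IHc IH]; rewrite IHc IHl.
- by elim: ch IH => [|[p c] l IHl] //= [IHc IH]; rewrite IHc IHl.
Qed.

Lemma wf_pr1 (nA : L -> nat) (t : tree R L) o :
  wf_tree nA t -> wf_tree (pr1_nA nA) (pr1_aux o t).
Proof.
elim/tree_nested_ind: t o => [u|I ch IH|ch IH] o //=.
- rewrite /pr1_nA /= => -[<- wf_ch]; split.
    by elim: ch 0%N {IH wf_ch} => [|c l IHl] k //=; rewrite IHl.
  elim: ch 0%N IH wf_ch => [|c l IHl] k //= [IHc IH] [wf_c wf_l].
  by split; [apply: IHc | apply: IHl].
- case=> <- wf_ch; split.
    by elim: ch {IH wf_ch} => [|[p c] l IHl]; rewrite ?big_nil // !big_cons IHl.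
  elim: ch IH wf_ch => [|[p c] l IHl] //= [IHc IH] [p0 [wf_c wf_l]].
  by split; [|split; [apply: IHc | apply: IHl]].
Qed.

End Refinement.

Section Derivative.
Variables (R : realType) (L : Type).
Implicit Types (pi be : strat R L) (t : tree R L).

Definition strat_line pi be (x : R) : strat R L := fun J a => pi J a + x * be J a.

Fixpoint dvalue pi be t : R :=
  match t with
  | Leaf _ => 0
  | PNode J ch => (fix go k l := if l is c :: l' then
      be J k * value pi c + pi J k * dvalue pi be c + go k.+1 l' else 0) 0%N ch
  | CNode ch => (fix go l :=
      if l is (p, c) :: l' then p * dvalue pi be c + go l' else 0) ch
  end.

Lemma is_derive_affine (a b x0 : R) : is_derive x0 (1 : R) (fun x : R => a + x * b) b.
Proof.
apply: is_derive_eq.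
by rewrite scaler0 add0r /GRing.scale /= mulr1 add0r.
Qed.

Lemma is_derive_value pi be t (x0 : R) :
  is_derive x0 (1 : R) (fun x => value (strat_line pi be x) t)
    (dvalue (strat_line pi be x0) be t).
Proof.
elim/tree_nested_ind: t => [u|J ch IH|ch IH] /=; first exact: is_derive_cst.
- elim: ch 0%N IH => [|c l IHl] k /=; first by move=> _; exact: is_derive_cst.
  case=> IHc IH; apply: is_derive_eq.
    exact: is_deriveD
      (is_deriveM (is_derive_affine (pi J k) (be J k) x0) IHc) (IHl k.+1 IH).
  by rewrite /GRing.scale /=; congr (_ + _); rewrite addrC [value _ c * _]mulrC.
- elim: ch IH => [|[p c] l IHl] /=; first by move=> _; exact: is_derive_cst.
  case=> IHc IH; apply: is_derive_eq.
    exact: is_deriveD (is_deriveM (is_derive_cst p x0 1) IHc) (IHl IH).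
  by rewrite /GRing.scale /= mulr0 addr0.
Qed.

Lemma dvalueB pi (b1 b2 : strat R L) t :
  dvalue pi (fun J a => b1 J a - b2 J a) t = dvalue pi b1 t - dvalue pi b2 t.
Proof.
elim/tree_nested_ind: t => [u|J ch IH|ch IH] /=; first by rewrite subr0.
- elim: ch 0%N IH => [|c l IHl] k /=; first by rewrite subr0.
  by case=> IHc IH; rewrite IHc IHl //; ring.
- elim: ch IH => [|[p c] l IHl] /=; first by rewrite subr0.
  by case=> IHc IH; rewrite IHc IHl //; ring.
Qed.

End Derivative.

Lemma is_derive_rmax_le0 (R : realType) (f : R -> R) (c d e : R) :
  0 < e -> is_derive c (1 : R) f d ->
  (forall h, 0 < h < e -> f (h + c) <= f c) -> d <= 0.
Proof.
move=> e0 fd cmax; have fdrvbl : derivable f c 1 by exact: ex_derive.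
rewrite -(@derive_val _ _ _ _ _ _ _ fd) ['D_1 f c]cvg_at_rightE //.
apply: limr_le.
  rewrite -(cvg_at_rightE (fun h : R => h^-1 *: ((f \o shift c) _ - f c))) //.
  apply: cvg_trans fdrvbl; apply: cvg_app.
  move=> A [r r0 Ar]; exists r => // x xr x0; apply: Ar => //.
  exact/lt0r_neq0.
near=> h; apply: mulr_ge0_le0.
  by rewrite invr_ge0; apply: ltW; near: h; exists 1 => /=.
rewrite subr_le0 [_%:A]mulr1; apply: cmax; apply/andP; split.
  by near: h; exists 1 => /=.
near: h; exists e => //= h; rewrite /= distrC subr0.
by move=> /(le_lt_trans (ler_norm _)).
Unshelve. all: by end_near. Qed.

Lemma val_attained (R : realType) (L : Type) (SC : strat R L -> Prop)
    (t : tree R L) pi :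
  SC pi -> (forall pi', SC pi' -> U t pi' <= U t pi) -> Defs.val SC t = U t pi.
Proof.
move=> SCpi pi_max; rewrite /Defs.val; set E := (X in sup X).
have ub : ubound E (U t pi) by move=> x [pi' [SCpi' ->]]; exact: pi_max.
have E_pi : E (U t pi) by exists pi.
apply/eqP; rewrite eq_le ge_sup //=; last by exists (U t pi).
by apply: sup_upper_bound; first by split; [exists (U t pi) | exists (U t pi)].
Qed.

Section Optimality.
Variables (R : realType) (L : eqType) (nA : L -> nat) (t : tree R L).
Implicit Types pi : strat R L.

Definition optimal pi :=
  is_strategy nA pi /\ forall pi', is_strategy nA pi' -> U t pi' <= U t pi.

Definition delta_strat (I : L) (a : nat) : strat R L :=
  fun J b => if (J == I) && (b == a) then 1 else 0.

Lemma sum_delta_strat I J a n :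
  \sum_(b < n) delta_strat I a J b = ((J == I) && (a < n)%N)%:R.
Proof.
rewrite /delta_strat; case: eqP => _ /=; last by rewrite big1.
by rewrite -big_mkcond /= (big_ord1_eq _ (fun=> 1)); case: ltnP.
Qed.

Lemma is_strategy_move_mass pi I m a h :
  is_strategy nA pi -> (m < nA I)%N -> (a < nA I)%N -> m != a -> 0 <= h <= pi I a ->
  is_strategy nA
    (strat_line pi (fun J b => delta_strat I m J b - delta_strat I a J b) h).
Proof.
move=> spi lt_m lt_a neq_ma /andP[h0 le_h] J; split; last first.
  rewrite big_split /= (spi J).2 -mulr_sumr sumrB !sum_delta_strat.
  by case: eqP => [->|_]; rewrite /= ?lt_m ?lt_a subrr mulr0 addr0.
move=> b lt_b; rewrite /strat_line /delta_strat.
have [eJI|_] /= := eqVneq J I; last by rewrite subrr mulr0 addr0 (spi J).1.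
subst I; have [->|_] /= := eqVneq b m.
  by rewrite (negPf neq_ma) subr0 mulr1 addr_ge0 // (spi J).1.
have [->|_] /= := eqVneq b a; first by rewrite sub0r mulrN1 subr_ge0.
by rewrite subrr mulr0 addr0 (spi J).1.
Qed.

Lemma dU_dvalue pi I a : dU t pi I a = dvalue pi (delta_strat I a) t.
Proof.
pose pi0 := upd_coord pi I a 0.
have line_upd x : upd_coord pi I a x = strat_line pi0 (delta_strat I a) x.
  apply/funext => J; apply/funext => b.
  rewrite /pi0 /upd_coord /strat_line /delta_strat.
  by case: ifP => _; rewrite ?mulr1 ?add0r ?mulr0 ?addr0.
have line_pi : strat_line pi0 (delta_strat I a) (pi I a) = pi.
  rewrite -line_upd; apply/funext => J; apply/funext => b; rewrite /upd_coord.
  by case: ifP => // /andP[/eqP-> /eqP->].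
rewrite /dU derive1E.
under eq_fun do rewrite UE line_upd.
by rewrite (@derive_val _ _ _ _ _ _ _ (is_derive_value _ _ t _)) line_pi.
Qed.

Lemma optimal_dvalue_le pi I m a : optimal pi ->
  (m < nA I)%N -> (a < nA I)%N -> 0 < pi I a ->
  dvalue pi (delta_strat I m) t <= dvalue pi (delta_strat I a) t.
Proof.
move=> [spi pi_max] lt_m lt_a pia_gt0; have [-> //|neq_ma] := eqVneq m a.
pose dir J b := delta_strat I m J b - delta_strat I a J b.
have line0 : strat_line pi dir 0 = pi.
  by apply/funext => J; apply/funext => b; rewrite /strat_line mul0r addr0.
have := is_derive_value pi dir t 0; rewrite line0 dvalueB => dpi.
rewrite -subr_le0; apply: (is_derive_rmax_le0 pia_gt0 dpi) => h /andP[h0 lt_h].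
rewrite addr0 line0 -!UE; apply: pi_max; apply: is_strategy_move_mass => //.
by rewrite ltW // ltW.
Qed.

Lemma optimal_CDT_eq pi : (forall I, (0 < nA I)%N) -> optimal pi -> CDT_eq nA t pi.
Proof.
move=> nA_gt0 opt_pi; split; first exact: opt_pi.1.
pose g I (b : nat) := dvalue pi (delta_strat I b) t.
pose lam I := g I [arg max_(b > Ordinal (nA_gt0 I)) g I b]%O.
exists lam, (fun I a => lam I - g I a) => I a lt_a.
have [m lam_m g_le_lam] : exists2 m : 'I_(nA I), lam I = g I m &
    forall b : 'I_(nA I), g I b <= lam I.
  by rewrite /lam; case: arg_maxP => //= m _ m_max; exists m => // b; exact: m_max.
rewrite dU_dvalue subr_ge0 (g_le_lam (Ordinal lt_a)); split => //; last first.
  by rewrite /g addrCA subrr addr0 subrr.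
have [-> |pia_neq0] := eqVneq (pi I a) 0; first by rewrite mulr0.
have pia_gt0 : 0 < pi I a by rewrite lt_def pia_neq0 (opt_pi.1 I).1.
suff -> : lam I = g I a by rewrite subrr mul0r.
apply/eqP; rewrite eq_le (g_le_lam (Ordinal lt_a)) lam_m.
by rewrite andbT; exact: optimal_dvalue_le opt_pi (ltn_ord m) lt_a pia_gt0.
Qed.

Lemma optimal_EDT_eq pi : optimal pi -> EDT_eq nA t pi.
Proof.
move=> [spi pi_max]; split => // I s dist_s.
have -> : upd pi I (pi I) = pi.
  by apply/funext => J; rewrite /upd; case: eqP => [->|].
by apply: pi_max => J; rewrite /upd; case: eqP => [->|].
Qed.

End Optimality.

Section Existence.
Import ArrowAsProduct.
Variables (R : realType) (L : eqType) (nA : L -> nat) (t : tree R L).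

Lemma strat_coord_continuous I a : continuous (fun pi : L -> nat -> R => pi I a).
Proof.
move=> pi; apply: (@continuous_comp _ _ _ (proj I) (proj a)); exact: proj_continuous.
Qed.

Definition bounded_strategies : set (L -> nat -> R) :=
  [set pi : L -> nat -> R |
    (forall I a, 0 <= pi I a <= 1) /\ forall I, \sum_(a < nA I) pi I a = 1].

Lemma bounded_strategies_compact : compact bounded_strategies.
Proof.
have -> : bounded_strategies =
    [set pi : L -> nat -> R |
      forall I, [set f : nat -> R | forall a, `[0, 1] (f a)] (pi I)] `&`
    \bigcap_(I in setT) [set pi : L -> nat -> R | \sum_(a < nA I) pi I a = 1].
  apply/seteqP; split => pi [pi01 pi_sum]; split => // I; [move=> _ |]; exact: pi_sum.
apply: compact_closedI.
  have box01 : compact [set f : nat -> R | forall a, `[0, 1] (f a)].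
    exact: (@tychonoff nat (fun=> R : topologicalType) _
              (fun=> @segment_compact R 0 1)).
  exact: tychonoff (fun=> box01).
apply: closed_bigI => I _.
apply: (@preimage_closed _ _ (fun pi : L -> nat -> R => \sum_(a < nA I) pi I a)
  [set x | x = 1]); last exact: closed_eq.
move=> pi _; apply: continuous_big => [|a _]; first exact: add_continuous.
exact: strat_coord_continuous.
Qed.

Lemma bounded_is_strategy pi : bounded_strategies pi -> is_strategy nA pi.
Proof.
by move=> [pi01 pi_sum] I; split=> [a _|]; [case/andP: (pi01 I a) | exact: pi_sum].
Qed.

Lemma optimal_exists :
  (forall I, (0 < nA I)%N) -> wf_tree nA t -> exists pi, optimal nA t pi.
Proof.
move=> nA_gt0 wf_t.
pose pure0 : L -> nat -> R := fun _ a => if a == 0%N then 1 else 0.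
have K_pure0 : bounded_strategies pure0.
  split=> [I a|I]; first by rewrite /pure0; case: eqP; rewrite ?lexx ?ler01.
  by rewrite -big_mkcond /= (big_ord1_eq _ (fun=> 1)) nA_gt0.
have value_cont := value_continuous (s := fun pi : L -> nat -> R => pi) (t := t)
  strat_coord_continuous.
have [pis K_pis pis_max] := compact_EVT_max (ex_intro _ _ K_pure0)
  bounded_strategies_compact (continuous_subspaceT value_cont).
have spis : is_strategy nA pis by apply: bounded_is_strategy; rewrite -inE.
exists pis; split => // pi spi.
(* [is_strategy] leaves the coordinates outside A_I free; zeroing them does not
   change the value. *)
pose clamp : L -> nat -> R := fun I a => if (a < nA I)%N then pi I a else 0.
have K_clamp : bounded_strategies clamp.
  split=> [I a|I]; rewrite /clamp.
    case: ifP => lt_a; last by rewrite lexx ler01.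
    by rewrite (spi I).1 // (is_dist_le1 (spi I)).
  by under eq_bigr do rewrite ltn_ord; exact: (spi I).2.
rewrite !UE (value_eq_on (pi' := clamp) wf_t); first by apply: pis_max; rewrite inE.
by move=> I a lt_a; rewrite /clamp lt_a.
Qed.

End Existence.

Lemma values_optimal (R : realType) (L : eqType) (nA : L -> nat) (t : tree R L) pis :
  (forall I, (0 < nA I)%N) -> optimal nA t pis ->
  [/\ opt_val nA t = U t pis, bEDT_val nA t = U t pis & bCDT_val nA t = U t pis].
Proof.
move=> nA_gt0 opt_pis.
have le_pis pi (SC : Prop) : is_strategy nA pi /\ SC -> U t pi <= U t pis.
  by case=> spi _; exact: opt_pis.2.
split; first exact: val_attained opt_pis.1 opt_pis.2.
  exact: val_attained (optimal_EDT_eq opt_pis) (fun pi => le_pis pi _).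
exact: val_attained (optimal_CDT_eq nA_gt0 opt_pis) (fun pi => le_pis pi _).
Qed.

Lemma U_pr1 (R : realType) (L : Type) (t : tree R L) (pi : strat R L) :
  U (pr1 t) (fun J => pi J.1) = U t pi.
Proof. by rewrite !UE value_pr1. Qed.

Theorem proposition3 (R : realType) (L : eqType) (nA : L -> nat)
  (t : tree R L)
  (hnA : forall I, (0 < nA I)%N)
  (hwf : wf_tree nA t)
  (hpos : 0 < opt_val nA t) :
  VoR_opt nA t = VoR_bEDT nA t /\ VoR_bEDT nA t = VoR_bCDT nA t /\
  1 <= VoR_bCDT nA t.
Proof.
have [pis opt_pis] := optimal_exists hnA hwf.
have hnA1 : forall J, (0 < pr1_nA nA J)%N by move=> J; exact: hnA.
have [pis1 opt_pis1] := optimal_exists hnA1 (wf_pr1 [::] hwf).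
have [opt0 EDT0 CDT0] := values_optimal hnA opt_pis.
have [opt1 EDT1 CDT1] := values_optimal hnA1 opt_pis1.
rewrite /VoR_opt /VoR_bEDT /VoR_bCDT opt0 EDT0 CDT0 opt1 EDT1 CDT1 in hpos *.
split=> //; split=> //.
rewrite ler_pdivlMr // mul1r -U_pr1; apply: opt_pis1.2 => J; exact: opt_pis.1.
Qed.
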